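(* There is a constant $C$ and infinitely many pairwise non-isomorphic finite graphs $G$ with $L(G)\ge T(D(G)-6)-C$.
   Context: The tower function is $T(0)=1$, $T(i)=2^{T(i-1)}$. Graphs are simple undirected graphs viewed as structures for the first-order language with adjacency symbol $\sim$ and equality. A sentence defines a finite graph $G$ if it is true on $G$ and false on every graph (of any cardinality) not isomorphic to $G$. $D(G)$ is the minimum quantifier rank of a sentence defining $G$, and $L(G)$ is the minimum length of a sentence defining $G$, length being the number of symbols with each variable and each relation symbol counted as a single symbol. *)

From Stdlib Require Import Arith Lia.

Record graph := Graph {
  V : Type;
  adj : V -> V -> Prop;
  adj_sym : forall x y, adj x y -> adj y x;
  adj_irrefl : forall x, ~ adj x x;
  V_inhabited : inhabited V
}.

Definition finite_graph (G : graph) : Prop :=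
  exists l : list (V G), forall v, List.In v l.

Definition iso (G H : graph) : Prop :=
  exists (f : V G -> V H) (g : V H -> V G),
    (forall x, g (f x) = x) /\ (forall y, f (g y) = y) /\
    (forall x y, adj G x y <-> adj H (f x) (f y)).

Inductive form :=
| FAdj : nat -> nat -> form
| FEq  : nat -> nat -> form
| FNot : form -> form
| FAnd : form -> form -> form
| FOr  : form -> form -> form
| FImp : form -> form -> form
| FIff : form -> form -> form
| FEx  : nat -> form -> form
| FAll : nat -> form -> form.

Fixpoint free (x : nat) (f : form) : Prop :=
  match f with
  | FAdj y z | FEq y z => x = y \/ x = z
  | FNot g => free x g
  | FAnd g h | FOr g h | FImp g h | FIff g h => free x g \/ free x h
  | FEx y g | FAll y g => x <> y /\ free x g
  end.

Definition sentence (f : form) : Prop := forall x, ~ free x f.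

Definition upd {T : Type} (e : nat -> T) (x : nat) (v : T) : nat -> T :=
  fun y => if Nat.eqb y x then v else e y.

Fixpoint sat (G : graph) (e : nat -> V G) (f : form) : Prop :=
  match f with
  | FAdj x y => adj G (e x) (e y)
  | FEq x y => e x = e y
  | FNot g => ~ sat G e g
  | FAnd g h => sat G e g /\ sat G e h
  | FOr g h => sat G e g \/ sat G e h
  | FImp g h => sat G e g -> sat G e h
  | FIff g h => sat G e g <-> sat G e h
  | FEx x g => exists v, sat G (upd e x v) g
  | FAll x g => forall v, sat G (upd e x v) g
  end.

Definition models (G : graph) (f : form) : Prop := forall e, sat G e f.

Fixpoint qrank (f : form) : nat :=
  match f with
  | FAdj _ _ | FEq _ _ => 0
  | FNot g => qrank g
  | FAnd g h | FOr g h | FImp g h | FIff g h => Nat.max (qrank g) (qrank h)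
  | FEx _ g | FAll _ g => S (qrank g)
  end.

(* Number of symbols in the standard written form:
   x ~ y and x = y : 3 symbols; ~g : 1 + |g|;
   (g * h) for a binary connective * : 3 + |g| + |h| (two parentheses and
   the connective); Qx g : 2 + |g|. *)
Fixpoint flength (f : form) : nat :=
  match f with
  | FAdj _ _ | FEq _ _ => 3
  | FNot g => 1 + flength g
  | FAnd g h | FOr g h | FImp g h | FIff g h => 3 + flength g + flength h
  | FEx _ g | FAll _ g => 2 + flength g
  end.

Definition defines (f : form) (G : graph) : Prop :=
  sentence f /\ models G f /\
  forall H : graph, ~ iso H G -> ~ models H f.

Definition is_D (G : graph) (d : nat) : Prop :=
  (exists f, defines f G /\ qrank f = d) /\
  (forall f, defines f G -> d <= qrank f).

Fixpoint tower (i : nat) : nat :=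
  match i with
  | 0 => 1
  | S j => 2 ^ tower j
  end.

(* Read a natural number as a hereditarily finite set, the elements of n being
   the positions of its 1-bits, and let the tree of s have the chains
   m_k ∈ ... ∈ m_1 ∈ s as vertices.  Seen from its parent, this vertex has
   type m_k: the types of its children are the elements of m_k.  The statement
   "a has type n seen from b" has quantifier rank j + 1 for n < tower j.
   If s < tower (j + 1) has its bits tower j - 1 and tower j - 2 set, the tree
   of s is the only model of a sentence of rank j + 4: a unique vertex has
   type s seen from itself, and every other vertex has, towards its parent, an
   edge along which it has type below tower j; the two large elements of s
   make the root and the orientation of these edges recognisable.  The
   2 ^ (tower j - 2) trees so obtained are pairwise non-isomorphic, whereas
   sentences shorter than L = tower (j - 2), once their variables are renamed
   below L, take fewer than 2 ^ 2 ^ (2 L) values.  Hence some tree of level j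
   has no defining sentence shorter than tower (j - 2) >= tower (D - 6). *)

From Stdlib Require Import Arith Lia List Classical ClassicalEpsilon
  FunctionalExtensionality Eqdep_dec Cantor Wf_nat.
Import ListNotations.

(* [x] only serves to write the empty disjunction [x <> x] and the empty
   conjunction [x = x] without adding free variables. *)
Fixpoint big_or (x : nat) (l : list form) : form :=
  match l with [] => FNot (FEq x x) | f :: r => FOr f (big_or x r) end.

Fixpoint big_and (x : nat) (l : list form) : form :=
  match l with [] => FEq x x | f :: r => FAnd f (big_and x r) end.

Lemma sat_big_or_map {A} G e x (F : A -> form) l :
  sat G e (big_or x (map F l)) <-> exists a, In a l /\ sat G e (F a).
Proof.
  induction l as [|a l IH]; cbn [map big_or sat In].
  - split; [intros H; now contradiction H | now intros (? & [] & _)].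
  - rewrite IH. split.
    + intros [H | (b & Hb & H)]; eauto.
    + intros (b & [<- | Hb] & H); eauto.
Qed.

Lemma sat_big_and_map {A} G e x (F : A -> form) l :
  sat G e (big_and x (map F l)) <-> forall a, In a l -> sat G e (F a).
Proof.
  induction l as [|a l IH]; cbn [map big_and sat In].
  - tauto.
  - rewrite IH. split.
    + intros [H1 H2] b [<- | Hb]; auto.
    + auto.
Qed.

Lemma free_big_or_map {A} v x (F : A -> form) l :
  free v (big_or x (map F l)) -> v = x \/ exists a, In a l /\ free v (F a).
Proof.
  induction l as [|a l IH]; cbn [map big_or free In]; [tauto|].
  intros [H | H]; [eauto|]. destruct (IH H) as [? | (b & Hb & Hv)]; eauto.
Qed.

Lemma free_big_and_map {A} v x (F : A -> form) l :
  free v (big_and x (map F l)) -> v = x \/ exists a, In a l /\ free v (F a).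
Proof.
  induction l as [|a l IH]; cbn [map big_and free In]; [tauto|].
  intros [H | H]; [eauto|]. destruct (IH H) as [? | (b & Hb & Hv)]; eauto.
Qed.

Lemma qrank_big_or_map {A} x (F : A -> form) l r :
  (forall a, In a l -> qrank (F a) <= r) -> qrank (big_or x (map F l)) <= r.
Proof.
  induction l as [|a l IH]; cbn; intros H; [lia|].
  apply Nat.max_lub; auto.
Qed.

Lemma qrank_big_and_map {A} x (F : A -> form) l r :
  (forall a, In a l -> qrank (F a) <= r) -> qrank (big_and x (map F l)) <= r.
Proof.
  induction l as [|a l IH]; cbn; intros H; [lia|].
  apply Nat.max_lub; auto.
Qed.

Lemma upd_eq {T} (e : nat -> T) x v : upd e x v x = v.
Proof. unfold upd. now rewrite Nat.eqb_refl. Qed.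

Lemma upd_neq {T} (e : nat -> T) x y v : y <> x -> upd e x v y = e y.
Proof. intros H. unfold upd. now destruct (Nat.eqb_spec y x). Qed.

Lemma iso_of_bijection (G H : graph) (f : V G -> V H) :
  (forall x y, f x = f y -> x = y) -> (forall y, exists x, f x = y) ->
  (forall x y, adj G x y <-> adj H (f x) (f y)) -> iso G H.
Proof.
  intros Hinj Hsurj Hadj. destruct (choice _ Hsurj) as [g Hg].
  exists f, g. split; [intro x; apply Hinj, Hg | auto].
Qed.

Lemma iso_sym G H : iso G H -> iso H G.
Proof.
  intros (f & g & gf & fg & Hadj). exists g, f. split; [|split]; auto.
  intros x y. rewrite Hadj, !fg. tauto.
Qed.

Lemma sat_iso G H (f : V G -> V H) (g : V H -> V G) :
  (forall x, g (f x) = x) -> (forall y, f (g y) = y) ->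
  (forall x y, adj G x y <-> adj H (f x) (f y)) ->
  forall phi e, sat G e phi <-> sat H (fun v => f (e v)) phi.
Proof.
  intros gf fg Hadj.
  assert (Hupd : forall e x v, (fun w => f (upd e x v w)) = upd (fun w => f (e w)) x (f v)).
  { intros e x v. apply functional_extensionality. intro w. unfold upd. now destruct (w =? x). }
  induction phi as [x y | x y | p IH | p IH q IH' | p IH q IH' | p IH q IH' | p IH q IH'
                    | x p IH | x p IH]; intros e; cbn [sat];
    try (rewrite ?IH, ?IH'; tauto).
  - apply Hadj.
  - split; [now intros -> | intros E; now rewrite <- (gf (e x)), <- (gf (e y)), E].
  - split.
    + intros [v Hv]. exists (f v). rewrite <- Hupd. now apply IH.
    + intros [w Hw]. exists (g w). apply IH. now rewrite Hupd, fg.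
  - split.
    + intros Hv w. specialize (Hv (g w)). apply IH in Hv. now rewrite Hupd, fg in Hv.
    + intros Hw v. apply IH. rewrite Hupd. apply Hw.
Qed.

Lemma models_iso G H phi : iso G H -> models G phi -> models H phi.
Proof.
  intros (f & g & gf & fg & Hadj) HG e.
  replace e with (fun v => f (g (e v))) by (apply functional_extensionality; intro; apply fg).
  apply (sat_iso G H f g gf fg Hadj), HG.
Qed.

(** * Types of vertices *)

Lemma testbit_pow_le n m : Nat.testbit n m = true -> 2 ^ m <= n.
Proof.
  intros H. rewrite Nat.testbit_true in H.
  destruct (Nat.lt_ge_cases n (2 ^ m)) as [Hlt | Hge]; auto.
  rewrite Nat.div_small in H by lia. discriminate.
Qed.

Lemma testbit_lt n m : Nat.testbit n m = true -> m < n.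
Proof.
  intros H. apply testbit_pow_le in H. pose proof (Nat.pow_gt_lin_r 2 m). lia.
Qed.

Lemma testbit_lt_exponent n m j : n < 2 ^ j -> Nat.testbit n m = true -> m < j.
Proof.
  intros Hn H. apply testbit_pow_le in H.
  destruct (Nat.lt_ge_cases m j) as [? | Hjm]; auto.
  pose proof (Nat.pow_le_mono_r 2 j m ltac:(lia) Hjm). lia.
Qed.

Definition bits (n : nat) : list nat := filter (Nat.testbit n) (seq 0 n).

Lemma in_bits n m : In m (bits n) <-> Nat.testbit n m = true.
Proof.
  unfold bits. rewrite filter_In, in_seq. split; [tauto|].
  intros H. pose proof (testbit_lt _ _ H). split; [lia | exact H].
Qed.

(* Seen from its neighbour [b], the vertex [a] has type [n] when the types of
   its other neighbours, each seen from [a], are the elements of [n]; a root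
   is seen from itself.  Fuel above [n] suffices, elements of [n] being
   smaller than [n]. *)
Fixpoint has_type_fuel (G : graph) (fuel n : nat) (a b : V G) : Prop :=
  match fuel with
  | 0 => True
  | S fuel =>
    (forall c, adj G a c -> c <> b ->
       exists m, Nat.testbit n m = true /\ has_type_fuel G fuel m c a) /\
    (forall m, Nat.testbit n m = true ->
       exists c, adj G a c /\ c <> b /\ has_type_fuel G fuel m c a)
  end.

Definition has_type (G : graph) (n : nat) (a b : V G) : Prop :=
  has_type_fuel G (S n) n a b.

Lemma has_type_fuel_enough G fuel fuel' n a b : n < fuel -> n < fuel' ->
  has_type_fuel G fuel n a b -> has_type_fuel G fuel' n a b.
Proof.
  revert fuel' n a b.
  induction fuel as [|fuel IH]; intros [|fuel'] n a b Hn Hn' Ha; try lia.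
  destruct Ha as [Hup Hdown]. split.
  - intros c Hac Hcb. destruct (Hup c Hac Hcb) as (m & Hm & Hc).
    pose proof (testbit_lt _ _ Hm).
    exists m. split; [exact Hm | apply (IH fuel'); auto; lia].
  - intros m Hm. destruct (Hdown m Hm) as (c & Hac & Hcb & Hc).
    pose proof (testbit_lt _ _ Hm).
    exists c. repeat split; auto. apply (IH fuel'); auto; lia.
Qed.

Lemma has_type_unfold G n a b : has_type G n a b <->
  (forall c, adj G a c -> c <> b -> exists m, Nat.testbit n m = true /\ has_type G m c a) /\
  (forall m, Nat.testbit n m = true -> exists c, adj G a c /\ c <> b /\ has_type G m c a).
Proof.
  assert (Hfuel : forall m c d, Nat.testbit n m = true ->
            has_type_fuel G n m c d <-> has_type G m c d).
  { intros m c d Hm. pose proof (testbit_lt _ _ Hm).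
    split; apply has_type_fuel_enough; lia. }
  unfold has_type at 1. cbn [has_type_fuel]. split; intros [Hup Hdown]; split.
  - intros c Hac Hcb. destruct (Hup c Hac Hcb) as (m & Hm & Hc).
    exists m. now rewrite <- Hfuel.
  - intros m Hm. destruct (Hdown m Hm) as (c & Hac & Hcb & Hc).
    exists c. now rewrite <- Hfuel.
  - intros c Hac Hcb. destruct (Hup c Hac Hcb) as (m & Hm & Hc).
    exists m. now rewrite Hfuel.
  - intros m Hm. destruct (Hdown m Hm) as (c & Hac & Hcb & Hc).
    exists c. now rewrite Hfuel.
Qed.

(* Extensionality: sets with the same elements are equal. *)
Lemma has_type_unique G n n' a b : has_type G n a b -> has_type G n' a b -> n = n'.
Proof.
  revert n' a b. induction n as [n IH] using (well_founded_induction lt_wf).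
  intros n' a b Hn Hn'.
  apply has_type_unfold in Hn as [Hup Hdown], Hn' as [Hup' Hdown'].
  apply Nat.bits_inj. intro m.
  destruct (Nat.testbit n m) eqn:Hm, (Nat.testbit n' m) eqn:Hm'; auto; exfalso.
  - destruct (Hdown m Hm) as (c & Hac & Hcb & Hc).
    destruct (Hup' c Hac Hcb) as (m' & Hm'' & Hc').
    assert (m = m') as <- by exact (IH m (testbit_lt _ _ Hm) m' c a Hc Hc').
    congruence.
  - destruct (Hdown' m Hm') as (c & Hac & Hcb & Hc).
    destruct (Hup c Hac Hcb) as (m' & Hm'' & Hc').
    assert (m' = m) as -> by exact (IH m' (testbit_lt _ _ Hm'') m c a Hc' Hc).
    congruence.
Qed.

(* [S (x + p)] is a variable distinct from [x] and [p]. *)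
Fixpoint type_form (fuel n x p : nat) : form :=
  match fuel with
  | 0 => FEq x x
  | S fuel =>
    let y := S (x + p) in
    FAnd (FAll y (FImp (FAnd (FAdj x y) (FNot (FEq y p)))
                       (big_or y (map (fun m => type_form fuel m y x) (bits n)))))
         (big_and x (map (fun m => FEx y (FAnd (FAnd (FAdj x y) (FNot (FEq y p)))
                                               (type_form fuel m y x)))
                         (bits n)))
  end.

Lemma sat_type_form_fuel G fuel n x p e :
  sat G e (type_form fuel n x p) <-> has_type_fuel G fuel n (e x) (e p).
Proof.
  revert n x p e. induction fuel as [|fuel IH]; intros n x p e; [cbn; tauto|].
  cbn [type_form has_type_fuel sat].
  set (y := S (x + p)).
  assert (Hx : forall c, upd e y c x = e x) by (intro; apply upd_neq; lia).
  assert (Hp : forall c, upd e y c p = e p) by (intro; apply upd_neq; lia).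
  setoid_rewrite sat_big_or_map. setoid_rewrite sat_big_and_map. cbn [sat].
  setoid_rewrite IH. setoid_rewrite upd_eq. setoid_rewrite Hx. setoid_rewrite Hp.
  setoid_rewrite in_bits. firstorder.
Qed.

Lemma sat_type_form G n x p e :
  sat G e (type_form (S n) n x p) <-> has_type G n (e x) (e p).
Proof. apply sat_type_form_fuel. Qed.

(** * The tree sentence *)

Definition low_type (G : graph) (T : nat) (a b : V G) : Prop :=
  exists t, t < T /\ has_type G t a b.

(* Every vertex but the root has an edge of low type towards its parent;
   [no_two_way_edge] orients these edges towards the root and
   [children_distinct] makes a child determined by its type. *)
Record tree_axioms (G : graph) (T s : nat) : Prop := {
  root_exists : exists r, has_type G s r r;
  root_unique : forall x y, has_type G s x x -> has_type G s y y -> x = y;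
  parent_exists : forall x, has_type G s x x \/ exists p, adj G x p /\ low_type G T x p;
  no_two_way_edge : forall x p, adj G x p -> low_type G T x p -> low_type G T p x -> False;
  children_distinct : forall x y z t, adj G x y -> adj G x z -> y <> z -> t < T ->
    has_type G t y x -> has_type G t z x -> False
}.

Definition root_form (s x : nat) : form := type_form (S s) s x x.

Definition low_type_form (T x p : nat) : form :=
  big_or x (map (fun t => type_form (S t) t x p) (seq 0 T)).

Definition tree_sentence (T s : nat) : form :=
  FAnd (FEx 0 (root_form s 0))
 (FAnd (FAll 0 (FAll 1 (FImp (FAnd (root_form s 0) (root_form s 1)) (FEq 0 1))))
 (FAnd (FAll 0 (FOr (root_form s 0) (FEx 1 (FAnd (FAdj 0 1) (low_type_form T 0 1)))))
 (FAnd (FAll 0 (FAll 1 (FImp (FAdj 0 1)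
          (FNot (FAnd (low_type_form T 0 1) (low_type_form T 1 0))))))
       (FAll 0 (FAll 1 (FAll 2 (FImp (FAnd (FAnd (FAdj 0 1) (FAdj 0 2)) (FNot (FEq 1 2)))
          (big_and 0 (map (fun t => FNot (FAnd (type_form (S t) t 1 0) (type_form (S t) t 2 0)))
                          (seq 0 T)))))))))).

Lemma sat_low_type_form G e T x p :
  sat G e (low_type_form T x p) <-> low_type G T (e x) (e p).
Proof.
  unfold low_type_form, low_type. rewrite sat_big_or_map.
  setoid_rewrite sat_type_form. setoid_rewrite in_seq.
  split; intros (t & Ht & H); exists t; split; auto; lia.
Qed.

Lemma sat_tree_sentence G e T s : sat G e (tree_sentence T s) <-> tree_axioms G T s.
Proof.
  unfold tree_sentence, root_form. cbn [sat].
  setoid_rewrite sat_type_form. setoid_rewrite sat_low_type_form.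
  setoid_rewrite sat_big_and_map. setoid_rewrite in_seq. cbn [sat].
  setoid_rewrite sat_type_form. unfold upd; cbn [Nat.eqb].
  split.
  - intros (A & B & C & D & E). constructor.
    + exact A.
    + intros x y Hx Hy. apply (B x y); auto.
    + exact C.
    + intros x p Hxp Hx Hp. apply (D x p Hxp); auto.
    + intros x y z t Hxy Hxz Hyz Ht Hy Hz.
      apply (E x y z (conj (conj Hxy Hxz) Hyz) t); auto. lia.
  - intros [A B C D E]. split; [exact A|]. split; [|split; [exact C|split]].
    + intros x y [Hx Hy]. auto.
    + intros x p Hxp [Hx Hp]. apply (D x p Hxp); auto.
    + intros x y z [[Hxy Hxz] Hyz] t Ht [Hy Hz]. apply (E x y z t); auto. lia.
Qed.

Lemma models_tree_sentence G T s : models G (tree_sentence T s) <-> tree_axioms G T s.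
Proof.
  split.
  - intros Hm. destruct (V_inhabited G) as [v]. apply (sat_tree_sentence G (fun _ => v)), Hm.
  - intros HT e. now apply sat_tree_sentence.
Qed.

Lemma free_type_form v fuel n x p : free v (type_form fuel n x p) -> v = x \/ v = p.
Proof.
  revert n x p. induction fuel as [|fuel IH]; intros n x p; cbn [type_form free]; [tauto|].
  intros [(Hne & [[[? | ?] | [? | ?]] | Hv]) | Hv]; try lia.
  - apply free_big_or_map in Hv as [? | (m & _ & Hv)]; [lia|].
    apply IH in Hv. lia.
  - apply free_big_and_map in Hv as [? | (m & _ & Hv)]; [auto|].
    cbn [free] in Hv. destruct Hv as (Hne & [[[? | ?] | [? | ?]] | Hv]); try lia.
    apply IH in Hv. lia.
Qed.

Lemma tree_sentence_closed T s : sentence (tree_sentence T s).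
Proof.
  intros v H. unfold tree_sentence, root_form, low_type_form in H.
  repeat match goal with
  | H : _ /\ _ |- _ => destruct H
  | H : _ \/ _ |- _ => destruct H
  | H : ex _ |- _ => destruct H
  | H : free _ (type_form _ _ _ _) |- _ => apply free_type_form in H
  | H : free _ (big_or _ (map _ _)) |- _ => apply free_big_or_map in H
  | H : free _ (big_and _ (map _ _)) |- _ => apply free_big_and_map in H
  | H : free _ _ |- _ => progress cbn [free] in H
  end; lia.
Qed.

Lemma qrank_type_form fuel j n x p : n < tower j -> qrank (type_form fuel n x p) <= S j.
Proof.
  revert j n x p. induction fuel as [|fuel IH]; intros j n x p Hn; cbn [type_form qrank]; [lia|].
  assert (Hsub : forall m y z, In m (bits n) -> qrank (type_form fuel m y z) <= j).
  { intros m y z Hm. apply in_bits in Hm. destruct j as [|j].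
    - cbn in Hn. replace n with 0 in Hm by lia. now rewrite Nat.bits_0 in Hm.
    - apply IH. exact (testbit_lt_exponent _ _ _ Hn Hm). }
  apply Nat.max_lub.
  - enough (qrank (big_or (S (x + p))
                     (map (fun m => type_form fuel m (S (x + p)) x) (bits n))) <= j) by lia.
    apply qrank_big_or_map. auto.
  - apply qrank_big_and_map. intros m Hm. cbn [qrank]. specialize (Hsub m (S (x + p)) x Hm). lia.
Qed.

Lemma qrank_tree_sentence j s : s < tower (S j) -> qrank (tree_sentence (tower j) s) <= j + 4.
Proof.
  intros Hs.
  assert (Hroot : forall x, qrank (root_form s x) <= S (S j)) by (intro; now apply qrank_type_form).
  assert (Hsmall : forall t x p, In t (seq 0 (tower j)) -> qrank (type_form (S t) t x p) <= S j)
    by (intros t x p Ht; apply in_seq in Ht; apply qrank_type_form; lia).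
  assert (Hlow : forall x p, qrank (low_type_form (tower j) x p) <= S j)
    by (intros; apply qrank_big_or_map; auto).
  assert (Hsib : qrank (big_and 0 (map (fun t => FNot (FAnd (type_form (S t) t 1 0)
                   (type_form (S t) t 2 0))) (seq 0 (tower j)))) <= S j).
  { apply qrank_big_and_map. intros t Ht. cbn [qrank]. apply Nat.max_lub; auto. }
  unfold tree_sentence. cbn [qrank].
  replace (j + 4) with (S (S (S (S j)))) by lia.
  repeat match goal with
  | |- Nat.max _ _ <= _ => apply Nat.max_lub
  | |- S _ <= S _ => apply le_n_S
  end.
  all: pose proof (Hroot 0); pose proof (Hroot 1); pose proof (Hlow 0 1); pose proof (Hlow 1 0);
       lia.
Qed.

(** * The tree of a hereditarily finite set *)

(* The chain [m_k ∈ ... ∈ m_1 ∈ s] is stored as [m_k :: ... :: m_1]; the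
   parent of [m :: l] is [l]. *)
Definition chain_top (s : nat) (l : list nat) : nat :=
  match l with [] => s | m :: _ => m end.

Fixpoint is_chain (s : nat) (l : list nat) : bool :=
  match l with [] => true | m :: l' => Nat.testbit (chain_top s l') m && is_chain s l' end.

Lemma is_chain_cons s m l :
  is_chain s (m :: l) = true <-> Nat.testbit (chain_top s l) m = true /\ is_chain s l = true.
Proof. apply Bool.andb_true_iff. Qed.

Definition chain (s : nat) : Type := {l : list nat | is_chain s l = true}.

Definition child_of (l l' : list nat) : Prop := exists m, l = m :: l'.

Lemma child_of_length l l' : child_of l l' -> length l = S (length l').
Proof. now intros [m ->]. Qed.

Definition tree_adj (s : nat) (a b : chain s) : Prop :=
  child_of (proj1_sig a) (proj1_sig b) \/ child_of (proj1_sig b) (proj1_sig a).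

Lemma tree_adj_sym s a b : tree_adj s a b -> tree_adj s b a.
Proof. unfold tree_adj. tauto. Qed.

Lemma tree_adj_irrefl s a : ~ tree_adj s a a.
Proof. intros [H | H]; apply child_of_length in H; lia. Qed.

Definition tree_root (s : nat) : chain s := exist _ [] eq_refl.

Definition tree (s : nat) : graph :=
  Graph (chain s) (tree_adj s) (tree_adj_sym s) (tree_adj_irrefl s) (inhabits (tree_root s)).

Lemma chain_eq s (a b : chain s) : proj1_sig a = proj1_sig b -> a = b.
Proof.
  destruct a as [a Ha], b as [b Hb]. cbn. intros <-. f_equal.
  apply UIP_dec, Bool.bool_dec.
Qed.

Lemma child_of_neq s (x p : chain s) : child_of (proj1_sig x) (proj1_sig p) -> x <> p.
Proof. intros Hxp ->. apply child_of_length in Hxp. lia. Qed.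

Lemma chain_parent s m l : is_chain s (m :: l) = true -> is_chain s l = true.
Proof. now intros [_ H]%is_chain_cons. Qed.

Lemma tree_has_type s n (x p : chain s) : chain_top s (proj1_sig x) = n ->
  (proj1_sig x = [] /\ p = x \/ child_of (proj1_sig x) (proj1_sig p)) -> has_type (tree s) n x p.
Proof.
  revert x p. induction n as [n IH] using (well_founded_induction lt_wf).
  intros [lx Hx] p Hn Hxp. cbn in Hn, Hxp. apply has_type_unfold. split.
  - intros [lc Hc] [[u Hu] | [u Hu]] Hcp; cbn in Hu.
    + exfalso. subst lx. destruct Hxp as [[? _] | [m Hm]]; [discriminate|].
      injection Hm as _ Hm. apply Hcp, chain_eq. cbn. congruence.
    + subst lc. destruct (proj1 (is_chain_cons _ _ _) Hc) as [Hu _]. rewrite Hn in Hu.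
      exists u. split; [exact Hu|].
      apply IH; [exact (testbit_lt _ _ Hu) | reflexivity | right; now exists u].
  - intros u Hu.
    assert (Hc : is_chain s (u :: lx) = true) by (apply is_chain_cons; now rewrite Hn).
    exists (exist _ (u :: lx) Hc). split; [|split].
    + right. now exists u.
    + intros <-. cbn in Hxp. destruct Hxp as [[_ Hp] | Hp].
      * apply (f_equal (fun c => length (proj1_sig c))) in Hp. cbn in Hp. lia.
      * apply child_of_length in Hp. cbn in Hp. lia.
    + apply IH; [exact (testbit_lt _ _ Hu) | reflexivity | right; now exists u].
Qed.

Lemma tree_root_type s : has_type (tree s) s (tree_root s) (tree_root s).
Proof. apply tree_has_type; cbn; auto. Qed.

Lemma tree_child_type s m (x p : chain s) :
  proj1_sig x = m :: proj1_sig p -> has_type (tree s) m x p.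
Proof. intros E. apply tree_has_type; [now rewrite E | right; now exists m]. Qed.

Lemma chain_top_lt s T m l : (forall m, Nat.testbit s m = true -> m < T) ->
  is_chain s (m :: l) = true -> m < T.
Proof.
  intros Hs. revert m. induction l as [|m' l IH]; intros m [Hm Hl]%is_chain_cons; cbn in Hm.
  - auto.
  - apply testbit_lt in Hm. specialize (IH m' Hl). lia.
Qed.

Section TreeTypes.

Variables s T a b : nat.
Hypothesis a_neq_b : a <> b.
Hypothesis bit_a : Nat.testbit s a = true.
Hypothesis bit_b : Nat.testbit s b = true.
Hypothesis T_le_pow_a : T <= 2 ^ a.
Hypothesis T_le_pow_b : T <= 2 ^ b.

(* Seen from any of its children, a vertex has a type at least [T]: the root
   has another child of type [a] or [b], and any other vertex has its parent
   as a further neighbour. *)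
Lemma tree_parent_type_ge (x p : chain s) t :
  child_of (proj1_sig x) (proj1_sig p) -> has_type (tree s) t p x -> T <= t.
Proof.
  destruct p as [lp Hp]. cbn [proj1_sig]. revert t x Hp.
  induction lp as [|m' lq IH]; intros t x Hp [m Hx] Ht;
    apply has_type_unfold in Ht as [Hup _].
  - assert (exists w, w <> m /\ Nat.testbit s w = true /\ T <= 2 ^ w) as (w & Hwm & Hw & HwT).
    { destruct (Nat.eq_dec a m); [exists b | exists a]; repeat split; auto; congruence. }
    assert (Hc : is_chain s [w] = true) by (cbn; now rewrite Hw).
    destruct (Hup (exist _ [w] Hc)) as (u & Hu & Hcu).
    + right. now exists w.
    + intros <-. cbn in Hx. congruence.
    + pose proof (tree_child_type s w (exist _ [w] Hc) (exist _ [] Hp) eq_refl) as Hw'.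
      rewrite (has_type_unique _ _ _ _ _ Hcu Hw') in Hu. apply testbit_pow_le in Hu. lia.
  - pose proof (chain_parent _ _ _ Hp) as Hq.
    destruct (Hup (exist _ lq Hq)) as (u & Hu & Hqu).
    + left. now exists m'.
    + intros <-. cbn in Hx. apply (f_equal (@length nat)) in Hx. cbn in Hx. lia.
    + assert (T <= u) by (apply (IH u (exist _ (m' :: lq) Hp) Hq); [now exists m' | exact Hqu]).
      apply testbit_pow_le in Hu. pose proof (Nat.pow_gt_lin_r 2 u). lia.
Qed.

Lemma tree_self_type_root n (x : chain s) : (forall u, Nat.testbit n u = true -> u < T) ->
  has_type (tree s) n x x -> x = tree_root s.
Proof.
  intros Hn Hx. destruct x as [[|m lp] Hc]; [now apply chain_eq|]. exfalso.
  pose proof (chain_parent _ _ _ Hc) as Hp.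
  apply has_type_unfold in Hx as [Hup _].
  destruct (Hup (exist _ lp Hp)) as (u & Hu & Hpu).
  - left. now exists m.
  - apply not_eq_sym, child_of_neq. now exists m.
  - apply Hn in Hu. enough (T <= u) by lia.
    apply (tree_parent_type_ge (exist _ (m :: lp) Hc) (exist _ lp Hp) u);
      [now exists m | exact Hpu].
Qed.

Hypothesis bits_s_lt : forall m, Nat.testbit s m = true -> m < T.

Lemma tree_satisfies_axioms : tree_axioms (tree s) T s.
Proof.
  assert (Hhigh : forall x p : chain s, child_of (proj1_sig x) (proj1_sig p) ->
                    low_type (tree s) T p x -> False).
  { intros x p Hxp (u & Hu & Hpx). pose proof (tree_parent_type_ge x p u Hxp Hpx). lia. }
  constructor.
  - exists (tree_root s). apply tree_root_type.
  - intros x y Hx Hy. now rewrite (tree_self_type_root s x), (tree_self_type_root s y).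
  - intros [[|m lp] Hc].
    + left. replace (exist _ [] Hc) with (tree_root s) by now apply chain_eq.
      apply tree_root_type.
    + right. exists (exist _ lp (chain_parent _ _ _ Hc)). split; [left; now exists m|].
      exists m. split; [exact (chain_top_lt s T m lp bits_s_lt Hc) | now apply tree_child_type].
  - intros x p [Hxp | Hpx] Hx Hp; eauto.
  - intros x y z t [Hyx | Hxy] [Hzx | Hxz] Hyz Ht Hy Hz;
      try solve [apply (Hhigh _ _ Hyx); now exists t | apply (Hhigh _ _ Hzx); now exists t].
    destruct Hxy as [u Hu], Hxz as [w Hw].
    pose proof (has_type_unique _ _ _ _ _ Hy (tree_child_type s u y x Hu)).
    pose proof (has_type_unique _ _ _ _ _ Hz (tree_child_type s w z x Hw)). subst u w.
    apply Hyz, chain_eq. congruence.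
Qed.

End TreeTypes.

(** * Models of the tree sentence *)

Section TreeAxiomsModels.

Variables (H : graph) (T s : nat).
Hypothesis axioms : tree_axioms H T s.
Hypothesis bits_s_lt : forall m, Nat.testbit s m = true -> m < T.

Lemma root_no_low_edge x p : has_type H s x x -> adj H x p -> low_type H T x p -> False.
Proof.
  intros Hx Hxp Hlow. apply has_type_unfold in Hx as [Hup _].
  assert (p <> x) by (intros ->; exact (adj_irrefl H x Hxp)).
  destruct (Hup p Hxp ltac:(assumption)) as (u & Hu & Hpx).
  apply (no_two_way_edge _ _ _ axioms x p Hxp Hlow). exists u. auto.
Qed.

Lemma low_parent_unique x p p' :
  adj H x p -> low_type H T x p -> adj H x p' -> low_type H T x p' -> p = p'.
Proof.
  intros Hxp (t & Ht & Hx) Hxp' Hlow'. apply NNPP. intros Hne.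
  apply has_type_unfold in Hx as [Hup _].
  destruct (Hup p' Hxp' (not_eq_sym Hne)) as (u & Hu & Hp'x).
  apply (no_two_way_edge _ _ _ axioms x p' Hxp' Hlow'). exists u.
  split; [pose proof (testbit_lt _ _ Hu); lia | exact Hp'x].
Qed.

Variable r : V H.
Hypothesis root_r : has_type H s r r.

Fixpoint embed (l : list nat) : V H :=
  match l with
  | [] => r
  | m :: l' =>
    let parent := match l' with [] => r | _ :: l'' => embed l'' end in
    epsilon (inhabits r)
      (fun c => adj H (embed l') c /\ c <> parent /\ has_type H m c (embed l'))
  end.

Definition embed_parent (l : list nat) : V H :=
  match l with [] => r | _ :: l' => embed l' end.

Lemma embed_step m l : Nat.testbit (chain_top s l) m = true ->
  has_type H (chain_top s l) (embed l) (embed_parent l) ->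
  adj H (embed l) (embed (m :: l)) /\ embed (m :: l) <> embed_parent l /\
  has_type H m (embed (m :: l)) (embed l).
Proof.
  intros Hm Hl. apply has_type_unfold in Hl as [_ Hdown].
  replace (embed (m :: l)) with (epsilon (inhabits r)
    (fun c => adj H (embed l) c /\ c <> embed_parent l /\ has_type H m c (embed l)))
    by now destruct l.
  apply epsilon_spec, Hdown, Hm.
Qed.

Lemma embed_type l : is_chain s l = true ->
  has_type H (chain_top s l) (embed l) (embed_parent l).
Proof.
  induction l as [|m l IH]; [intros _; exact root_r|].
  intros [Hm Hl]%is_chain_cons. apply (embed_step m l Hm (IH Hl)).
Qed.

Lemma embed_cons m l : is_chain s (m :: l) = true ->
  adj H (embed l) (embed (m :: l)) /\ embed (m :: l) <> embed_parent l /\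
  has_type H m (embed (m :: l)) (embed l).
Proof. intros [Hm Hl]%is_chain_cons. exact (embed_step m l Hm (embed_type l Hl)). Qed.

Lemma embed_cons_low_type m l : is_chain s (m :: l) = true ->
  adj H (embed (m :: l)) (embed l) /\ low_type H T (embed (m :: l)) (embed l).
Proof.
  intros Hc. destruct (embed_cons m l Hc) as (Hadj & _ & Hm).
  split; [now apply adj_sym|].
  exists m. split; [exact (chain_top_lt s T m l bits_s_lt Hc) | exact Hm].
Qed.

Lemma embed_not_root m l : is_chain s (m :: l) = true -> embed (m :: l) <> r.
Proof.
  intros Hc E. destruct (embed_cons_low_type m l Hc) as [Hadj Hlow]. rewrite E in Hadj, Hlow.
  exact (root_no_low_edge r (embed l) root_r Hadj Hlow).
Qed.

Lemma embed_inj l1 l2 : is_chain s l1 = true -> is_chain s l2 = true ->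
  embed l1 = embed l2 -> l1 = l2.
Proof.
  revert l2. induction l1 as [|m1 l1 IH]; intros [|m2 l2] Hc1 Hc2 E; auto.
  - exfalso. symmetry in E. exact (embed_not_root m2 l2 Hc2 E).
  - exfalso. exact (embed_not_root m1 l1 Hc1 E).
  - destruct (embed_cons_low_type m1 l1 Hc1) as [Hadj1 Hlow1].
    destruct (embed_cons_low_type m2 l2 Hc2) as [Hadj2 Hlow2].
    rewrite E in Hadj1, Hlow1.
    assert (l1 = l2) as <-.
    { apply IH; [exact (chain_parent _ _ _ Hc1) | exact (chain_parent _ _ _ Hc2) |].
      exact (low_parent_unique _ _ _ Hadj1 Hlow1 Hadj2 Hlow2). }
    destruct (embed_cons m1 l1 Hc1) as (_ & _ & Hm1).
    destruct (embed_cons m2 l1 Hc2) as (_ & _ & Hm2).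
    rewrite E in Hm1. now rewrite (has_type_unique _ _ _ _ _ Hm1 Hm2).
Qed.

Lemma embed_neighbour l y : is_chain s l = true -> adj H (embed l) y ->
  exists l', is_chain s l' = true /\ embed l' = y /\ (child_of l l' \/ child_of l' l).
Proof.
  intros Hc Hy. destruct (classic (y = embed_parent l)) as [Hyp | Hyp].
  - destruct l as [|m l'].
    + cbn in Hyp. subst y. destruct (adj_irrefl H r Hy).
    + exists l'. repeat split; auto; [exact (chain_parent _ _ _ Hc) | left; now exists m].
  - apply embed_type in Hc as Htype. apply has_type_unfold in Htype as [Hup _].
    destruct (Hup y Hy Hyp) as (u & Hu & Hyu).
    assert (Hc' : is_chain s (u :: l) = true) by now apply is_chain_cons.
    exists (u :: l). repeat split; [exact Hc' | | right; now exists u].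
    destruct (embed_cons u l Hc') as (Hadj & _ & Hu').
    apply NNPP. intros Hne.
    apply (children_distinct _ _ _ axioms (embed l) y (embed (u :: l)) u Hy Hadj); auto.
    exact (chain_top_lt s T u l bits_s_lt Hc').
Qed.

(* Types increase towards the root, whence the induction on [T - t]. *)
Lemma embed_low_typed t y p : adj H y p -> has_type H t y p -> t < T ->
  exists l, is_chain s l = true /\ embed l = y.
Proof.
  revert y p.
  induction t as [t IH] using (well_founded_induction (well_founded_ltof _ (fun t => T - t))).
  intros y p Hyp Ht HtT.
  destruct (parent_exists _ _ _ axioms p) as [Hroot | (q & Hpq & t' & Ht'T & Ht')].
  - rewrite (root_unique _ _ _ axioms p r Hroot root_r) in Hyp.
    destruct (embed_neighbour [] y eq_refl (adj_sym _ _ _ Hyp)) as (l & Hl & El & _). eauto.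
  - assert (Hqy : q <> y).
    { intros ->. apply (no_two_way_edge _ _ _ axioms p y Hpq); [exists t' | exists t]; auto. }
    apply has_type_unfold in Ht' as Hup. destruct Hup as [Hup _].
    destruct (Hup y (adj_sym _ _ _ Hyp) (not_eq_sym Hqy)) as (u & Hu & Hyu).
    rewrite (has_type_unique _ _ _ _ _ Hyu Ht) in Hu. apply testbit_lt in Hu.
    destruct (IH t' ltac:(unfold ltof; lia) p q Hpq Ht' Ht'T) as (l & Hl & <-).
    destruct (embed_neighbour l y Hl (adj_sym _ _ _ Hyp)) as (l' & Hl' & E' & _). eauto.
Qed.

Lemma embed_surj y : exists l, is_chain s l = true /\ embed l = y.
Proof.
  destruct (parent_exists _ _ _ axioms y) as [Hroot | (p & Hyp & t & HtT & Ht)].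
  - exists []. split; [reflexivity|]. exact (root_unique _ _ _ axioms r y root_r Hroot).
  - exact (embed_low_typed t y p Hyp Ht HtT).
Qed.

Lemma embed_iso : iso (tree s) H.
Proof.
  apply (iso_of_bijection (tree s) H (fun c => embed (proj1_sig c))).
  - intros [l1 H1] [l2 H2] E. apply chain_eq. exact (embed_inj l1 l2 H1 H2 E).
  - intros y. destruct (embed_surj y) as (l & Hl & E). now exists (exist _ l Hl).
  - intros [l1 H1] [l2 H2]. cbn. split.
    + intros [[m E] | [m E]]; cbn in E; subst.
      * apply adj_sym, (embed_cons m l2 H1).
      * apply (embed_cons m l1 H2).
    + intros Hadj. destruct (embed_neighbour l1 _ H1 Hadj) as (l & Hl & E & Hrel).
      assert (l = l2) as -> by exact (embed_inj _ _ Hl H2 E).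
      destruct Hrel; [left | right]; auto.
Qed.

End TreeAxiomsModels.

Lemma tree_axioms_iso H T s : tree_axioms H T s -> (forall m, Nat.testbit s m = true -> m < T) ->
  iso (tree s) H.
Proof.
  intros axioms Hs. destruct (root_exists _ _ _ axioms) as [r Hr].
  exact (embed_iso H T s axioms Hs r Hr).
Qed.

(** * Codes with a recognisable root *)

Lemma tower_le_mono a b : a <= b -> tower a <= tower b.
Proof.
  induction 1 as [|b _ IH]; [lia|]. cbn. pose proof (Nat.pow_gt_lin_r 2 (tower b)). lia.
Qed.

Lemma tower_lt_mono a b : a < b -> tower a < tower b.
Proof.
  intros Hab. apply Nat.lt_le_trans with (tower (S a)).
  - apply Nat.pow_gt_lin_r. lia.
  - now apply tower_le_mono.
Qed.

Lemma le_pow_pred_pred n : 4 <= n -> n <= 2 ^ (n - 2).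
Proof.
  induction n as [|n IH]; intros Hn; [lia|].
  destruct (Nat.eq_dec n 3) as [-> | Hne]; [cbn; lia|].
  replace (S n - 2) with (S (n - 2)) by lia. rewrite Nat.pow_succ_r'.
  specialize (IH ltac:(lia)). lia.
Qed.

(* The two top bits give the root two children whose types are large enough
   for [tree_parent_type_ge]. *)
Definition good_code (j s : nat) : Prop :=
  2 <= j /\ s < tower (S j) /\
  Nat.testbit s (tower j - 1) = true /\ Nat.testbit s (tower j - 2) = true.

Lemma good_code_bits_lt j s m : good_code j s -> Nat.testbit s m = true -> m < tower j.
Proof. intros (_ & Hs & _) Hm. exact (testbit_lt_exponent _ _ _ Hs Hm). Qed.

Lemma good_code_root_children j s : good_code j s ->
  tower j - 1 <> tower j - 2 /\
  Nat.testbit s (tower j - 1) = true /\ Nat.testbit s (tower j - 2) = true /\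
  tower j <= 2 ^ (tower j - 1) /\ tower j <= 2 ^ (tower j - 2).
Proof.
  intros (Hj & _ & Hbit1 & Hbit2).
  assert (H4 : 4 <= tower j) by exact (tower_le_mono 2 j Hj).
  pose proof (le_pow_pred_pred _ H4).
  assert (2 ^ (tower j - 2) <= 2 ^ (tower j - 1)) by (apply Nat.pow_le_mono_r; lia).
  repeat split; auto; lia.
Qed.

Lemma good_code_tree_axioms j s : good_code j s -> tree_axioms (tree s) (tower j) s.
Proof.
  intros Hgood. destruct (good_code_root_children j s Hgood) as (Hab & Ha & Hb & HTa & HTb).
  apply (tree_satisfies_axioms s (tower j) _ _ Hab Ha Hb HTa HTb).
  intros m. now apply good_code_bits_lt.
Qed.

Lemma tree_sentence_defines j s : good_code j s -> defines (tree_sentence (tower j) s) (tree s).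
Proof.
  intros Hgood. split; [apply tree_sentence_closed | split].
  - now apply models_tree_sentence, good_code_tree_axioms.
  - intros H Hni Hm. apply Hni, iso_sym, tree_axioms_iso with (tower j).
    + now apply models_tree_sentence.
    + intros m. now apply good_code_bits_lt.
Qed.

(* An isomorphism must send the root to a vertex of type [s1] seen from
   itself, which in [tree s2] can only be its root. *)
Lemma good_code_iso_eq j1 s1 j2 s2 : good_code j1 s1 -> good_code j2 s2 -> j1 <= j2 ->
  iso (tree s1) (tree s2) -> s1 = s2.
Proof.
  intros Hgood1 Hgood2 Hj Hiso.
  pose proof (models_iso _ _ _ Hiso (proj1 (proj2 (tree_sentence_defines j1 s1 Hgood1)))) as Hm.
  apply models_tree_sentence in Hm. destruct (root_exists _ _ _ Hm) as [x Hx].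
  destruct (good_code_root_children j2 s2 Hgood2) as (Hab & Ha & Hb & HTa & HTb).
  assert (x = tree_root s2) as ->.
  { apply (tree_self_type_root s2 (tower j2) _ _ Hab Ha Hb HTa HTb s1); [|exact Hx].
    intros u Hu. pose proof (good_code_bits_lt _ _ _ Hgood1 Hu).
    pose proof (tower_le_mono _ _ Hj). lia. }
  exact (has_type_unique _ _ _ _ _ Hx (tree_root_type s2)).
Qed.

Lemma good_code_level j1 j2 s : good_code j1 s -> good_code j2 s -> j1 = j2.
Proof.
  intros Hgood1 Hgood2.
  pose proof (good_code_bits_lt _ _ _ Hgood1 (proj1 (proj2 (proj2 Hgood2)))).
  pose proof (good_code_bits_lt _ _ _ Hgood2 (proj1 (proj2 (proj2 Hgood1)))).
  destruct (Nat.lt_trichotomy j1 j2) as [Hlt | [? | Hlt]]; auto;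
    apply tower_lt_mono in Hlt; lia.
Qed.

Lemma tree_iso_good_code j1 s1 j2 s2 : good_code j1 s1 -> good_code j2 s2 ->
  iso (tree s1) (tree s2) -> j1 = j2 /\ s1 = s2.
Proof.
  intros Hgood1 Hgood2 Hiso.
  assert (s1 = s2) as <-.
  { destruct (Nat.le_ge_cases j1 j2).
    - exact (good_code_iso_eq j1 s1 j2 s2 Hgood1 Hgood2 ltac:(assumption) Hiso).
    - symmetry. apply (good_code_iso_eq j2 s2 j1 s1 Hgood2 Hgood1); auto using iso_sym. }
  split; [exact (good_code_level _ _ _ Hgood1 Hgood2) | reflexivity].
Qed.

Fixpoint lists_upto (B n : nat) : list (list nat) :=
  match n with
  | 0 => [[]]
  | S n => [] :: flat_map (fun l => map (fun m => m :: l) (seq 0 B)) (lists_upto B n)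
  end.

Lemma in_lists_upto B n l : length l <= n -> Forall (fun m => m < B) l -> In l (lists_upto B n).
Proof.
  revert l. induction n as [|n IH]; intros [|m l] Hl HB; cbn in *; auto; try lia.
  right. apply in_flat_map. inversion HB; subst. exists l. split; [apply IH; auto; lia|].
  apply (in_map (fun m' => m' :: l)), in_seq. lia.
Qed.

Lemma chain_bounds s l : is_chain s l = true ->
  length l + chain_top s l <= s /\ Forall (fun m => m < s) l.
Proof.
  induction l as [|m l IH]; intros Hc; cbn; [split; auto|].
  apply is_chain_cons in Hc as [Hm Hl]. destruct (IH Hl) as [Hlen Hall].
  apply testbit_lt in Hm. split; [lia|]. constructor; auto. lia.
Qed.

Lemma tree_finite s : finite_graph (tree s).
Proof.
  exists (flat_map (fun l => match Bool.bool_dec (is_chain s l) true with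
                              | left Hl => [exist _ l Hl] | right _ => [] end)
                   (lists_upto s s)).
  intros [l Hl]. apply in_flat_map. exists l. split.
  - destruct (chain_bounds s l Hl). apply in_lists_upto; auto. lia.
  - destruct (Bool.bool_dec (is_chain s l) true) as [Hl' | ]; [|congruence].
    left. now apply chain_eq.
Qed.

(** * Counting short sentences *)

Fixpoint vars (f : form) : list nat :=
  match f with
  | FAdj x y | FEq x y => [x; y]
  | FNot g => vars g
  | FAnd g h | FOr g h | FImp g h | FIff g h => vars g ++ vars h
  | FEx x g | FAll x g => x :: vars g
  end.

Fixpoint rename (r : nat -> nat) (f : form) : form :=
  match f with
  | FAdj x y => FAdj (r x) (r y)
  | FEq x y => FEq (r x) (r y)
  | FNot g => FNot (rename r g)
  | FAnd g h => FAnd (rename r g) (rename r h)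
  | FOr g h => FOr (rename r g) (rename r h)
  | FImp g h => FImp (rename r g) (rename r h)
  | FIff g h => FIff (rename r g) (rename r h)
  | FEx x g => FEx (r x) (rename r g)
  | FAll x g => FAll (r x) (rename r g)
  end.

Lemma flength_rename r f : flength (rename r f) = flength f.
Proof. induction f; cbn; auto. Qed.

Lemma vars_rename r f : vars (rename r f) = map r (vars f).
Proof. induction f; cbn; rewrite ?map_app; congruence. Qed.

Lemma length_vars_le f : length (vars f) <= flength f.
Proof. induction f; cbn; rewrite ?length_app; lia. Qed.

Lemma flength_ge_3 f : 3 <= flength f.
Proof. induction f; cbn; lia. Qed.

Lemma upd_rename {T} (e e' : nat -> T) r x v vs :
  (forall w, In w vs -> e w = e' (r w)) -> (forall w, In w vs -> r w = r x -> w = x) ->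
  forall w, In w vs -> upd e x v w = upd e' (r x) v (r w).
Proof.
  intros He Hinj w Hw. unfold upd.
  destruct (Nat.eqb_spec w x) as [-> | Hwx]; [now rewrite Nat.eqb_refl|].
  destruct (Nat.eqb_spec (r w) (r x)); [destruct Hwx |]; auto.
Qed.

Lemma sat_rename G r f e e' :
  (forall v, In v (vars f) -> e v = e' (r v)) ->
  (forall v w, In v (vars f) -> In w (vars f) -> r v = r w -> v = w) ->
  sat G e f <-> sat G e' (rename r f).
Proof.
  revert e e'.
  induction f as [x y | x y | p IH | p IH q IH' | p IH q IH' | p IH q IH' | p IH q IH'
                 | x p IH | x p IH]; intros e e' He Hinj; cbn [vars rename sat] in *.
  1, 2: rewrite (He x), (He y); cbn; tauto.
  1: rewrite (IH e e'); tauto.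
  1-4: rewrite (IH e e'), (IH' e e'); [tauto | ..];
       intros; first [apply He | apply Hinj]; auto using in_or_app.
  all: assert (Hupd : forall v, sat G (upd e x v) p <-> sat G (upd e' (r x) v) (rename r p))
         by (intro v; apply IH;
             [ apply upd_rename; intros; [apply He | apply Hinj]; auto using in_cons, in_eq
             | intros; apply Hinj; auto using in_cons ]);
       setoid_rewrite Hupd; tauto.
Qed.

Fixpoint position (v : nat) (l : list nat) : nat :=
  match l with [] => 0 | a :: l' => if Nat.eqb a v then 0 else S (position v l') end.

Lemma position_lt v l : In v l -> position v l < length l.
Proof.
  induction l as [|a l IH]; cbn; [tauto|]. intros [-> | H].
  - rewrite Nat.eqb_refl. lia.
  - destruct (Nat.eqb a v); [lia|]. specialize (IH H). lia.
Qed.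

Lemma nth_position v l : In v l -> nth (position v l) l 0 = v.
Proof.
  induction l as [|a l IH]; cbn; [tauto|]. intros H.
  destruct (Nat.eqb_spec a v); auto. destruct H; [congruence | auto].
Qed.

Lemma position_inj v w l : In v l -> In w l -> position v l = position w l -> v = w.
Proof. intros Hv Hw E. now rewrite <- (nth_position v l Hv), <- (nth_position w l Hw), E. Qed.

Definition normalize (f : form) : form :=
  rename (fun v => position v (nodup Nat.eq_dec (vars f))) f.

Lemma models_normalize G f : models G f <-> models G (normalize f).
Proof.
  set (vs := nodup Nat.eq_dec (vars f)).
  assert (Hinj : forall v w, In v (vars f) -> In w (vars f) ->
                   position v vs = position w vs -> v = w)
    by (intros v w Hv Hw; apply position_inj; apply nodup_In; auto).
  unfold normalize. fold vs. split.
  - intros Hm e'.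
    apply (sat_rename G (fun v => position v vs) f (fun v => e' (position v vs)) e'); auto.
  - intros Hm e. apply (sat_rename G (fun v => position v vs) f e (fun y => e (nth y vs 0))); auto.
    intros v Hv. now rewrite nth_position by now apply nodup_In.
Qed.

Lemma normalize_vars_lt f v : In v (vars (normalize f)) -> v < flength f.
Proof.
  unfold normalize. rewrite vars_rename. intros (w & Ev & Hw)%in_map_iff. subst v.
  assert (Hlen : length (nodup Nat.eq_dec (vars f)) <= length (vars f)).
  { apply NoDup_incl_length; [apply NoDup_nodup|]. intros x Hx. now apply nodup_In in Hx. }
  pose proof (position_lt w (nodup Nat.eq_dec (vars f)) (proj2 (nodup_In _ _ _) Hw)).
  pose proof (length_vars_le f). lia.
Qed.

Fixpoint encode (f : form) : nat :=
  match f with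
  | FAdj x y => 9 * to_nat (x, y) + 0
  | FEq x y => 9 * to_nat (x, y) + 1
  | FNot g => 9 * encode g + 2
  | FAnd g h => 9 * to_nat (encode g, encode h) + 3
  | FOr g h => 9 * to_nat (encode g, encode h) + 4
  | FImp g h => 9 * to_nat (encode g, encode h) + 5
  | FIff g h => 9 * to_nat (encode g, encode h) + 6
  | FEx x g => 9 * to_nat (x, encode g) + 7
  | FAll x g => 9 * to_nat (x, encode g) + 8
  end.

Lemma encode_inj f1 f2 : encode f1 = encode f2 -> f1 = f2.
Proof.
  revert f2.
  induction f1 as [x y | x y | p IH | p IH q IH' | p IH q IH' | p IH q IH' | p IH q IH'
                  | x p IH | x p IH];
    intros [x' y' | x' y' | p' | p' q' | p' q' | p' q' | p' q' | x' p' | x' p'] E;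
    cbn [encode] in E; try lia;
    repeat match goal with
    | E : 9 * ?a + ?i = 9 * ?b + ?i |- _ => assert (a = b) by lia; clear E
    | E : 9 * ?a = 9 * ?b |- _ => assert (a = b) by lia; clear E
    | E : to_nat _ = to_nat _ |- _ => apply to_nat_inj in E; injection E as ? ?
    end; subst; f_equal; auto.
Qed.

Lemma pow2_pow2_succ n : 2 ^ 2 ^ S n = 2 ^ 2 ^ n * 2 ^ 2 ^ n.
Proof. rewrite Nat.pow_succ_r', Nat.mul_comm, Nat.pow_mul_r. apply Nat.pow_2_r. Qed.

Lemma pow2_pow2_le_mono m n : m <= n -> 2 ^ 2 ^ m <= 2 ^ 2 ^ n.
Proof. intros Hmn. apply Nat.pow_le_mono_r, Nat.pow_le_mono_r; lia. Qed.

Lemma lt_pow2_pow2 n : n < 2 ^ 2 ^ n.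
Proof. pose proof (Nat.pow_gt_lin_r 2 n). pose proof (Nat.pow_gt_lin_r 2 (2 ^ n)). lia. Qed.

Lemma pair_code_lt a b k m n : k <= 8 -> 2 <= m -> S (S m) <= n ->
  a < 2 ^ 2 ^ m -> b < 2 ^ 2 ^ m -> 9 * to_nat (a, b) + k < 2 ^ 2 ^ n.
Proof.
  intros Hk Hm Hn Ha Hb. apply Nat.lt_le_trans with (2 ^ 2 ^ S (S m));
    [|now apply pow2_pow2_le_mono].
  rewrite !pow2_pow2_succ.
  pose proof (pow2_pow2_le_mono 2 m Hm) as HP. set (P := 2 ^ 2 ^ m) in *. cbn in HP.
  assert (Hpair : to_nat (a, b) * 2 <= 2 * P * (2 * P)) by (pose proof (to_nat_spec a b); nia).
  assert (HQ : 256 <= P * P) by nia.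
  set (Q := P * P) in *. nia.
Qed.

Lemma encode_lt L f : (forall v, In v (vars f) -> v < L) -> encode f < 2 ^ 2 ^ (flength f + L).
Proof.
  induction f as [x y | x y | p IH | p IH q IH' | p IH q IH' | p IH q IH' | p IH q IH'
                 | x p IH | x p IH]; intros HL; cbn [encode flength vars] in *.
  1, 2: pose proof (lt_pow2_pow2 (S L)); pose proof (HL x (in_eq _ _));
        pose proof (HL y (in_cons _ _ _ (in_eq _ _)));
        apply (pair_code_lt _ _ _ (S L)); lia.
  1: { change (1 + flength p + L) with (S (flength p + L)). rewrite pow2_pow2_succ.
       pose proof (IH HL). pose proof (flength_ge_3 p).
       pose proof (pow2_pow2_le_mono 2 (flength p + L) ltac:(lia)). cbn in *. nia. }
  1-4: pose proof (flength_ge_3 p);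
       apply (pair_code_lt _ _ _ (flength p + flength q + L)); try lia;
       [eapply Nat.lt_le_trans; [apply IH | apply pow2_pow2_le_mono; lia]
       |eapply Nat.lt_le_trans; [apply IH' | apply pow2_pow2_le_mono; lia]];
       intros; apply HL, in_or_app; auto.
  all: pose proof (flength_ge_3 p); pose proof (lt_pow2_pow2 (flength p + L));
       pose proof (HL x (in_eq _ _)); pose proof (IH ltac:(auto using in_cons));
       apply (pair_code_lt _ _ _ (flength p + L)); lia.
Qed.

Lemma pigeonhole n m (h : nat -> nat) : (forall i, i < n -> h i < m) ->
  (forall i i', i < n -> i' < n -> h i = h i' -> i = i') -> n <= m.
Proof.
  intros Hlt Hinj.
  assert (Hnodup : NoDup (map h (seq 0 n))).
  { apply NoDup_map_NoDup_ForallPairs; [|apply seq_NoDup].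
    intros i i' Hi Hi' E. apply in_seq in Hi, Hi'. apply Hinj; auto; lia. }
  assert (Hincl : incl (map h (seq 0 n)) (seq 0 m)).
  { intros y (i & <- & Hi)%in_map_iff. apply in_seq in Hi. apply in_seq.
    specialize (Hlt i ltac:(lia)). lia. }
  pose proof (NoDup_incl_length Hnodup Hincl) as Hlen.
  now rewrite length_map, !length_seq in Hlen.
Qed.

(* Normalized sentences of length [< L] have codes below [2 ^ 2 ^ (2 * L)],
   and non-isomorphic graphs cannot share a defining sentence. *)
Lemma few_graphs_with_short_definitions (Gs : nat -> graph) N L :
  (forall i i', i < N -> i' < N -> iso (Gs i) (Gs i') -> i = i') ->
  (forall i, i < N -> exists f, defines f (Gs i) /\ flength f < L) ->
  N <= 2 ^ 2 ^ (2 * L).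
Proof.
  intros Hiso Hshort.
  destruct (choice (fun i f => i < N -> defines f (Gs i) /\ flength f < L)) as [f Hf].
  { intros i. destruct (Nat.lt_ge_cases i N) as [Hi | Hi].
    - destruct (Hshort i Hi) as [f Hf]. now exists f.
    - exists (FEq 0 0). lia. }
  apply (pigeonhole N _ (fun i => encode (normalize (f i)))).
  - intros i Hi. destruct (Hf i Hi) as [_ Hlen].
    eapply Nat.lt_le_trans; [apply (encode_lt (flength (f i))), normalize_vars_lt|].
    unfold normalize. rewrite flength_rename. apply pow2_pow2_le_mono. lia.
  - intros i i' Hi Hi' E. apply encode_inj in E.
    destruct (Hf i Hi) as [(_ & _ & Hfi) _], (Hf i' Hi') as [(_ & Hi'f & _) _].
    apply eq_sym, Hiso; auto. apply NNPP. intros Hni. apply (Hfi _ Hni).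
    apply models_normalize. rewrite E. now apply (models_normalize (Gs i') (f i')).
Qed.

Definition family_code (j i : nat) : nat := i + 2 ^ (tower j - 1) + 2 ^ (tower j - 2).

Lemma family_code_good j i : 2 <= j -> i < 2 ^ (tower j - 2) -> good_code j (family_code j i).
Proof.
  intros Hj Hi. pose proof (tower_le_mono 2 j Hj) as H4. cbn in H4. unfold family_code.
  set (X := 2 ^ (tower j - 2)) in *.
  assert (E1 : 2 ^ (tower j - 1) = 2 * X).
  { unfold X. rewrite <- Nat.pow_succ_r'. f_equal. lia. }
  assert (E2 : tower (S j) = 4 * X).
  { unfold X. cbn [tower]. replace (tower j) with (2 + (tower j - 2)) at 1 by lia.
    now rewrite Nat.pow_add_r. }
  rewrite E1. repeat split; auto; [lia | |]; apply Nat.testbit_true.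
  - rewrite E1. replace ((i + 2 * X + X) / (2 * X)) with 1; [reflexivity|].
    apply Nat.div_unique with (X + i); lia.
  - fold X. replace ((i + 2 * X + X) / X) with 3; [reflexivity|].
    apply Nat.div_unique with i; lia.
Qed.

Lemma pow2_pow2_double_lt L : 3 <= L -> 2 ^ 2 ^ (2 * L) < 2 ^ (2 ^ 2 ^ L - 2).
Proof.
  intros HL. apply Nat.pow_lt_mono_r; [lia|].
  assert (Hlin : 2 * L + 1 <= 2 ^ L).
  { induction L as [|L IH]; [lia|].
    destruct (Nat.eq_dec L 2) as [-> | ]; [cbn; lia|].
    rewrite Nat.pow_succ_r'. specialize (IH ltac:(lia)). lia. }
  pose proof (Nat.pow_le_mono_r 2 _ _ ltac:(lia) Hlin).
  pose proof (Nat.pow_le_mono_r 2 6 (2 * L) ltac:(lia) ltac:(lia)).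
  rewrite Nat.pow_add_r in *. cbn in *. lia.
Qed.

(* The [2 ^ (tower j - 2)] trees of [family_code j] are pairwise
   non-isomorphic, too many for the sentences shorter than [tower (j - 2)]. *)
Lemma hard_tree_exists j : 4 <= j ->
  exists s, good_code j s /\ forall f, defines f (tree s) -> tower (j - 2) <= flength f.
Proof.
  intros Hj. apply NNPP. intros Hnone.
  set (L := tower (j - 2)).
  assert (HT : tower j = 2 ^ 2 ^ L).
  { unfold L. replace j with (S (S (j - 2))) at 1 by lia. reflexivity. }
  assert (HL : 3 <= L).
  { pose proof (tower_le_mono 2 (j - 2) ltac:(lia)) as H4. change (tower 2) with 4 in H4. lia. }
  assert (Hshort : forall i, i < 2 ^ (tower j - 2) ->
            exists f, defines f (tree (family_code j i)) /\ flength f < L).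
  { intros i Hi. apply NNPP. intros Hlong. apply Hnone.
    exists (family_code j i). split; [apply family_code_good; auto; lia|].
    intros f Hf. apply Nat.nlt_ge. intros Hlt. apply Hlong. eauto. }
  assert (Hiso : forall i i', i < 2 ^ (tower j - 2) -> i' < 2 ^ (tower j - 2) ->
            iso (tree (family_code j i)) (tree (family_code j i')) -> i = i').
  { intros i i' Hi Hi' Hiso.
    destruct (tree_iso_good_code j _ j _ (family_code_good j i ltac:(lia) Hi)
                (family_code_good j i' ltac:(lia) Hi') Hiso) as [_ E].
    unfold family_code in E. lia. }
  pose proof (few_graphs_with_short_definitions _ _ L Hiso Hshort).
  pose proof (pow2_pow2_double_lt L HL). rewrite <- HT in *. lia.
Qed.

Lemma defines_is_D G f : defines f G -> exists d, is_D G d /\ d <= qrank f.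
Proof.
  intros Hf.
  destruct (dec_inh_nat_subset_has_unique_least_element
              (fun d => exists f, defines f G /\ qrank f = d)) as (d & [Hd Hleast] & _).
  - intros d. apply classic.
  - eauto.
  - exists d. split; [split|].
    + exact Hd.
    + intros f' Hf'. apply Hleast. eauto.
    + apply Hleast. eauto.
Qed.

Theorem theorem10p3 :
  exists C : nat, exists Gs : nat -> graph,
    (forall i, finite_graph (Gs i)) /\
    (forall i j, i <> j -> ~ iso (Gs i) (Gs j)) /\
    (forall i, exists d, is_D (Gs i) d /\
       forall f, defines f (Gs i) -> tower (d - 6) <= flength f + C).
Proof.
  destruct (choice (fun i s => good_code (i + 4) s /\
              forall f, defines f (tree s) -> tower (i + 2) <= flength f)) as [code Hcode].
  { intros i. destruct (hard_tree_exists (i + 4) ltac:(lia)) as (s & Hgood & Hhard).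
    exists s. now replace (i + 2) with (i + 4 - 2) by lia. }
  exists 0, (fun i => tree (code i)). split; [|split].
  - intros i. apply tree_finite.
  - intros i i' Hne Hiso. apply Hne.
    destruct (tree_iso_good_code _ _ _ _ (proj1 (Hcode i)) (proj1 (Hcode i')) Hiso). lia.
  - intros i. destruct (Hcode i) as [Hgood Hhard].
    pose proof (tree_sentence_defines _ _ Hgood) as Hdef.
    destruct (defines_is_D _ _ Hdef) as (d & HD & Hd).
    exists d. split; [exact HD|]. intros f Hf.
    pose proof (qrank_tree_sentence (i + 4) (code i) (proj1 (proj2 Hgood))).
    pose proof (tower_le_mono (d - 6) (i + 2) ltac:(lia)).
    pose proof (Hhard f Hf). lia.
Qed.
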